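(* Let $\mathcal H$ be a non-binary MMP hypergraph of hypergraph-dimension $n\ge 3$ with $l$ hyperedges. Then $\mathcal H$ satisfies the e-inequalities $$l_{cM}<l\qquad\text{and}\qquad l_{cm}<l .$$
   Context: A hypergraph $\mathcal H=(V,E)$ consists of a finite vertex set $V$ and a family $E$ of subsets of $V$ (hyperedges). An MMP hypergraph of hypergraph-dimension $n\ge3$ is a connected hypergraph in which: every vertex belongs to at least one hyperedge; every hyperedge contains at least $2$ and at most $n$ vertices; no hyperedge shares only one vertex with another hyperedge; and any two hyperedges intersect in at most $n-2$ vertices. Consider $0$-$1$ assignments to the vertices and the rules: (i) no two vertices within any hyperedge are both assigned $1$; (ii) in every hyperedge not all vertices are assigned $0$. $\mathcal H$ is non-binary if no $0$-$1$ assignment satisfies both (i) and (ii), and binary otherwise. A classical assignment is a $0$-$1$ assignment satisfying rule (i) in which no further vertex can be switched from $0$ to $1$ without violating (i). For a classical assignment, the classical hyperedge number $l_c$ is the number of hyperedges containing a vertex assigned $1$; $l_{cM}$ and $l_{cm}$ denote the maximum and minimum of $l_c$ over all classical assignments. *)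

From mathcomp Require Import all_boot.
Set Implicit Arguments. Unset Strict Implicit. Unset Printing Implicit Defensive.

Section Hyper.
Variable V : finType.
Variable E : {set {set V}}.

Definition hadj : rel V := fun x y => [exists e in E, (x \in e) && (y \in e)].

Definition hconnected : Prop := forall x y : V, connect hadj x y.

Definition MMP (n : nat) : Prop :=
  3 <= n /\
  [/\ hconnected,
      (forall v : V, exists2 e, e \in E & v \in e),
      (forall e, e \in E -> 2 <= #|e| <= n),
      (forall e f, e \in E -> f \in E -> e != f -> #|e :&: f| != 1) &
      (forall e f, e \in E -> f \in E -> e != f -> #|e :&: f| <= n - 2)].

(* A 0-1 assignment is encoded by the set S of vertices assigned 1. *)
Definition rule_i (S : {set V}) : bool := [forall e in E, #|e :&: S| <= 1].
Definition rule_ii (S : {set V}) : bool := [forall e in E, e :&: S != set0].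

Definition non_binary : Prop := ~ exists S : {set V}, rule_i S && rule_ii S.

Definition classical (S : {set V}) : bool :=
  rule_i S && [forall v, (v \notin S) ==> ~~ rule_i (v |: S)].

Definition lc (S : {set V}) : nat := #|[set e in E | ~~ [disjoint e & S]]|.

(* maximum and minimum over classical assignments (which always exist;
   the default values 0 / #|E| are therefore never the result alone) *)
Definition lcM : nat := \max_(S : {set V} | classical S) lc S.
Definition lcm : nat := \big[minn/#|E|]_(S : {set V} | classical S) lc S.

End Hyper.

(* If S met every hyperedge it
   would satisfy rule (ii) as well, which non-binarity forbids; hence
   l_c(S) < l for every classical S.  Classical assignments exist (any rule-(i)
   set of maximum size is one), so l_cM and l_cm are values l_c(S) of
   classical assignments and both lie below l. *)
From mathcomp Require Import all_boot.

Set Implicit Arguments.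
Unset Strict Implicit.
Unset Printing Implicit Defensive.

Lemma geq_bigminn_cond (I : finType) (P : pred I) (F : I -> nat) x i0 :
  P i0 -> \big[minn/x]_(i | P i) F i <= F i0.
Proof.
move=> Pi0; elim: (index_enum I) (mem_index_enum i0) => //.
move=> i r IHr; rewrite inE big_cons => /predU1P[<-|i0r]; first by rewrite Pi0 geq_minl.
by case: ifP => _; [rewrite geq_min IHr ?orbT | exact: IHr].
Qed.

Section ClassicalHyperedgeNumber.

Variables (V : finType) (E : {set {set V}}).

Lemma lc_le_card (S : {set V}) : lc E S <= #|E|.
Proof. by apply: subset_leq_card; apply/subsetP => e; rewrite inE => /andP[]. Qed.

Lemma lc_eq_card (S : {set V}) : (lc E S == #|E|) = rule_ii E S.
Proof.
have sub : [set e in E | ~~ [disjoint e & S]] \subset E.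
  by apply/subsetP => e; rewrite inE => /andP[].
rewrite eqn_leq lc_le_card /=.
have -> : (#|E| <= lc E S) = ([set e in E | ~~ [disjoint e & S]] == E).
  by rewrite eqEcard sub.
rewrite eqEsubset sub /=.
apply/subsetP/forall_inP => [hitE e eE | hitE e eE].
  by have := hitE e eE; rewrite inE eE setI_eq0.
by rewrite inE eE -setI_eq0 hitE.
Qed.

Lemma non_binary_lc_lt_card (S : {set V}) :
  non_binary E -> rule_i E S -> lc E S < #|E|.
Proof.
move=> nonbin ruleS; rewrite ltn_neqAle lc_le_card andbT lc_eq_card.
by apply/negP => ruleS'; apply: nonbin; exists S; rewrite ruleS.
Qed.

Lemma max_rule_i_classical (S : {set V}) :
  rule_i E S -> (forall T, rule_i E T -> #|T| <= #|S|) -> classical E S.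
Proof.
move=> ruleS maxS; rewrite /classical ruleS /=.
apply/forall_inP => v vS; apply/negP => /maxS.
by rewrite cardsU1 vS ltnn.
Qed.

Lemma classical_exists : exists S, classical E S.
Proof.
have rule_i0 : rule_i E set0 by apply/forall_inP => e _; rewrite setI0 cards0.
exists [arg max_(S > set0 | rule_i E S) #|S|].
by case: arg_maxnP => // S; apply: max_rule_i_classical.
Qed.

End ClassicalHyperedgeNumber.

Theorem lemma5 (V : finType) (E : {set {set V}}) (n : nat) :
  MMP E n -> non_binary E ->
  lcM E < #|E| /\ lcm E < #|E|.
Proof.
move=> _ nonbin.
have lc_lt S : classical E S -> lc E S < #|E|.
  by case/andP => ruleS _; apply: non_binary_lc_lt_card.
have [S0 classS0] := classical_exists E.
split.
  by rewrite /lcM (bigmax_eq_arg S0) //; apply: lc_lt; case: arg_maxnP.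
exact: leq_ltn_trans (geq_bigminn_cond _ _ classS0) (lc_lt _ classS0).
Qed.
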